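(* Let $\mathsf L$ be a comonad over $\mathrm{dom}$ on $\mathcal{C}^{\mathbf 2}$, and let $(f,s)$ and $(g,t)$ be $\mathsf L$-coalgebras with $f\colon X\to Y$ an isomorphism. Then every morphism $(h,k)\colon f\to g$ of $\mathcal{C}^{\mathbf 2}$ is a morphism of $\mathsf L$-coalgebras $(f,s)\to(g,t)$.
   Context: $\mathcal{C}^{\mathbf 2}$ is the arrow category (morphisms $(h,k)\colon f\to g$ are commuting squares $gh=kf$). A comonad over $\mathrm{dom}$ is given by a functorial factorisation $(E,\lambda,\rho)$ ($E\colon\mathcal{C}^{\mathbf 2}\to\mathcal{C}$, natural $\lambda\colon\mathrm{dom}\Rightarrow E$, $\rho\colon E\Rightarrow\mathrm{cod}$, $\rho_f\lambda_f=f$) with natural maps $\sigma_f\colon Ef\to E(\lambda_f)$ with $\sigma_f\lambda_f=\lambda_{\lambda_f}$, $\rho_{\lambda_f}\sigma_f=1$, $E(1_X,\rho_f)\sigma_f=1$, $E(1_X,\sigma_f)\sigma_f=\sigma_{\lambda_f}\sigma_f$. An $\mathsf L$-coalgebra is $(f,s)$ with $s\colon Y\to Ef$, $sf=\lambda_f$, $\rho_fs=1_Y$, $\sigma_fs=E(1_X,s)s$; a morphism $(h,k)\colon(f,s)\to(g,t)$ is a square with $tk=E(h,k)s$. *)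

Set Implicit Arguments.
Unset Strict Implicit.

(** Categories, hom-types with Leibniz equality; [cmp g f] = g ∘ f. *)
Record Cat := {
  ob :> Type;
  hom : ob -> ob -> Type;
  cmp : forall a b c : ob, hom b c -> hom a b -> hom a c;
  idm : forall a : ob, hom a a;
  cmp_id_l : forall a b (f : hom a b), cmp (idm b) f = f;
  cmp_id_r : forall a b (f : hom a b), cmp f (idm a) = f;
  cmp_assoc : forall a b c d (f : hom a b) (g : hom b c) (h : hom c d),
      cmp h (cmp g f) = cmp (cmp h g) f
}.

Arguments hom {C} : rename.
Arguments cmp {C a b c} : rename.
Arguments idm {C} : rename.

Definition is_iso (C : Cat) (X Y : C) (f : hom X Y) : Prop :=
  exists g : hom Y X, cmp g f = idm X /\ cmp f g = idm Y.

(** A morphism (h,k) : f -> g in C^2 (f : X -> Y, g : X' -> Y') is a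
    pair h : X -> X', k : Y -> Y' with a proof of the square g h = k f. *)
Record FunctFact (C : Cat) := {
  E : forall X Y : C, hom X Y -> C;
  Emap : forall (X Y X' Y' : C) (f : hom X Y) (g : hom X' Y')
           (h : hom X X') (k : hom Y Y'),
           cmp g h = cmp k f -> hom (E f) (E g);
  Emap_id : forall (X Y : C) (f : hom X Y) (H : cmp f (idm X) = cmp (idm Y) f),
      Emap H = idm (E f);
  Emap_comp : forall (X Y X' Y' X'' Y'' : C) (f : hom X Y) (g : hom X' Y')
      (l : hom X'' Y'') (h : hom X X') (k : hom Y Y') (h' : hom X' X'')
      (k' : hom Y' Y'') (H1 : cmp g h = cmp k f) (H2 : cmp l h' = cmp k' g)
      (H3 : cmp l (cmp h' h) = cmp (cmp k' k) f),
      Emap H3 = cmp (Emap H2) (Emap H1);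
  lam : forall (X Y : C) (f : hom X Y), hom X (E f);
  rho : forall (X Y : C) (f : hom X Y), hom (E f) Y;
  lam_nat : forall (X Y X' Y' : C) (f : hom X Y) (g : hom X' Y')
      (h : hom X X') (k : hom Y Y') (H : cmp g h = cmp k f),
      cmp (lam g) h = cmp (Emap H) (lam f);
  rho_nat : forall (X Y X' Y' : C) (f : hom X Y) (g : hom X' Y')
      (h : hom X X') (k : hom Y Y') (H : cmp g h = cmp k f),
      cmp (rho g) (Emap H) = cmp k (rho f);
  rho_lam : forall (X Y : C) (f : hom X Y), cmp (rho f) (lam f) = f
}.

Arguments E {C} F {X Y} f : rename.
Arguments Emap {C} F {X Y X' Y' f g h k} _ : rename.
Arguments lam {C} F {X Y} f : rename.
Arguments rho {C} F {X Y} f : rename.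

(** Where an
    axiom mentions E on a square whose commutativity is derivable, it is
    stated for every proof of that square (proofs exist, so this is
    exactly the informal axiom). *)
Record ComonadDom (C : Cat) := {
  FF :> FunctFact C;
  sigma : forall (X Y : C) (f : hom X Y), hom (E FF f) (E FF (lam FF f));
  sigma_nat : forall (X Y X' Y' : C) (f : hom X Y) (g : hom X' Y')
      (h : hom X X') (k : hom Y Y') (H : cmp g h = cmp k f)
      (H' : cmp (lam FF g) h = cmp (Emap FF H) (lam FF f)),
      cmp (sigma g) (Emap FF H) = cmp (Emap FF H') (sigma f);
  sigma_lam : forall (X Y : C) (f : hom X Y),
      cmp (sigma f) (lam FF f) = lam FF (lam FF f);
  rho_sigma : forall (X Y : C) (f : hom X Y),
      cmp (rho FF (lam FF f)) (sigma f) = idm (E FF f);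
  E_rho_sigma : forall (X Y : C) (f : hom X Y)
      (H : cmp f (idm X) = cmp (rho FF f) (lam FF f)),
      cmp (Emap FF H) (sigma f) = idm (E FF f);
  sigma_coassoc : forall (X Y : C) (f : hom X Y)
      (H : cmp (lam FF (lam FF f)) (idm X) = cmp (sigma f) (lam FF f)),
      cmp (Emap FF H) (sigma f) = cmp (sigma (lam FF f)) (sigma f)
}.

Arguments sigma {C} L {X Y} f : rename.

Definition is_coalg (C : Cat) (L : ComonadDom C) (X Y : C) (f : hom X Y)
    (s : hom Y (E L f)) : Prop :=
  cmp s f = lam L f /\
  cmp (rho L f) s = idm Y /\
  (forall H : cmp (lam L f) (idm X) = cmp s f,
      cmp (sigma L f) s = cmp (Emap L H) s).

Definition is_coalg_mor (C : Cat) (L : ComonadDom C) (X Y X' Y' : C)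
    (f : hom X Y) (g : hom X' Y') (s : hom Y (E L f)) (t : hom Y' (E L g))
    (h : hom X X') (k : hom Y Y') (H : cmp g h = cmp k f) : Prop :=
  cmp t k = cmp (Emap L H) s.

Arguments is_coalg {C} L {X Y} f s.
Arguments is_coalg_mor {C} L {X Y X' Y'} f g s t {h k} H.


Set Implicit Arguments.
Unset Strict Implicit.

(* Precomposed with f, the coalgebra-morphism equation holds for every square,
   since s f = lam_f, t g = lam_g and lam is natural; an isomorphism f has
   a section, so it can be cancelled on the right. *)

Lemma split_epi_cancel_r (C : Cat) (X Y Z : C) (f : hom X Y) (f' : hom Y X)
    (u v : hom Y Z) (Hff' : cmp f f' = idm Y) (Huv : cmp u f = cmp v f) :
  u = v.
Proof.
  rewrite <- (cmp_id_r u), <- (cmp_id_r v), <- Hff', !cmp_assoc, Huv.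
  reflexivity.
Qed.

Lemma coalg_mor_cmp_dom (C : Cat) (F : FunctFact C) (X Y X' Y' : C)
    (f : hom X Y) (g : hom X' Y') (s : hom Y (E F f)) (t : hom Y' (E F g))
    (h : hom X X') (k : hom Y Y') (H : cmp g h = cmp k f)
    (Hs : cmp s f = lam F f) (Ht : cmp t g = lam F g) :
  cmp (cmp t k) f = cmp (cmp (Emap F H) s) f.
Proof.
  rewrite <- !cmp_assoc, Hs, <- (lam_nat F H), <- H, cmp_assoc, Ht.
  reflexivity.
Qed.

Theorem corollary6p3 (C : Cat) (L : ComonadDom C) (X Y X' Y' : C)
    (f : hom X Y) (g : hom X' Y') (s : hom Y (E L f)) (t : hom Y' (E L g))
    (Hs : is_coalg L f s) (Ht : is_coalg L g t) (Hf : is_iso f)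
    (h : hom X X') (k : hom Y Y') (H : cmp g h = cmp k f) :
  is_coalg_mor L f g s t H.
Proof.
  destruct Hs as [Hs _], Ht as [Ht _], Hf as [f' [_ Hff']].
  apply (split_epi_cancel_r Hff').
  exact (coalg_mor_cmp_dom H Hs Ht).
Qed.
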